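(* Let $A$ be any algebra (over a field of characteristic $0$) that is alternative and satisfies $a(bc)=b(ac)$ for all $a,b,c$. Then for all $a,b,c,d,e\in A$: \[ ((ba)c)d=((ac)b)d,\qquad (((ab)c)d)e=(((ac)b)d)e,\qquad (((ab)c)d)e=(((ab)d)c)e. \]
   Context: An algebra is alternative if $(x,x,y)=0=(x,y,y)$ for all $x,y$, where $(x,y,z)=(xy)z-x(yz)$. This variety is the Koszul dual of the variety of left-symmetric algebras satisfying $(ab)c+(ba)c+(ac)b+(ca)b+(bc)a+(cb)a=0$. *)

From mathcomp Require Import all_boot all_order all_algebra.
Set Implicit Arguments. Unset Strict Implicit. Unset Printing Implicit Defensive.
Import GRing.Theory.
Local Open Scope ring_scope.

Definition bilinear_mul (K : fieldType) (V : lmodType K) (mul : V -> V -> V) : Prop :=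
  (forall (k : K) (x y z : V), mul (k *: x + y) z = k *: mul x z + mul y z) /\
  (forall (k : K) (x y z : V), mul x (k *: y + z) = k *: mul x y + mul x z).

Definition assoc (K : fieldType) (V : lmodType K) (mul : V -> V -> V) (x y z : V) : V :=
  mul (mul x y) z - mul x (mul y z).

Definition alternative (K : fieldType) (V : lmodType K) (mul : V -> V -> V) : Prop :=
  forall x y : V, assoc mul x x y = 0 /\ assoc mul x y y = 0.

Definition char0 (K : fieldType) : Prop := [pchar K] =i pred0.

From mathcomp Require Import all_boot all_order all_algebra.
Set Implicit Arguments. Unset Strict Implicit. Unset Printing Implicit Defensive.
Import GRing.Theory.
Local Open Scope ring_scope.

(* The associator (x, y, z) of an alternative algebra is alternating, and
   left commutativity gives [x, y] z = 2 (x, y, z).  Hence left multiplications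
   slide into every slot of the associator,
   x (y, z, w) = (x y, z, w) = (y, x z, w) = (y, z, x w), and the Teichmueller
   identity then makes x (y, z, w) alternating in all four arguments.  It
   follows that (x, y, z) w = 2 x (y, z, w), that right multiplications commute
   with L_x L_y, and that (x [y, z]) w = 0 and (x (y, z, w)) v = 0.  The three
   identities reduce to these two vanishing products through
   (x y) z - (x z) y = 2 (x, y, z) + x [y, z]. *)

Lemma natmul2I (K : fieldType) (V : lmodType K) :
  char0 K -> injective (fun v : V => v *+ 2).
Proof.
move=> K0 u v /= /eqP; rewrite -!scaler_nat => /eqP; apply: scalerI.
by rewrite (pcharf0P K).1.
Qed.

Lemma oppr_self_eq0 (K : fieldType) (V : lmodType K) (v : V) :
  char0 K -> v = - v -> v = 0.
Proof.
by move=> K0 vN; apply: (natmul2I K0); rewrite /= mul0rn mulr2n {1}vN addNr.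
Qed.

Section NonassociativeAlgebra.

Variables (K : fieldType) (V : lmodType K) (mul : V -> V -> V).
Hypothesis mul_bilinear : bilinear_mul mul.

Local Notation "x ** y" := (mul x y) (at level 40, left associativity).
Local Notation "(| x , y , z |)" := (assoc mul x y z).

Lemma bmulDl x y z : (x + y) ** z = x ** z + y ** z.
Proof. by have := mul_bilinear.1 1 x y z; rewrite !scale1r. Qed.

Lemma bmulDr x y z : x ** (y + z) = x ** y + x ** z.
Proof. by have := mul_bilinear.2 1 x y z; rewrite !scale1r. Qed.

Lemma bmul0l x : 0 ** x = 0.
Proof. by apply: (addrI (0 ** x)); rewrite -bmulDl !addr0. Qed.

Lemma bmul0r x : x ** 0 = 0.
Proof. by apply: (addrI (x ** 0)); rewrite -bmulDr !addr0. Qed.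

Lemma bmulNl x y : (- x) ** y = - (x ** y).
Proof. by apply/eqP; rewrite -addr_eq0 -bmulDl addNr bmul0l. Qed.

Lemma bmulNr x y : x ** (- y) = - (x ** y).
Proof. by apply/eqP; rewrite -addr_eq0 -bmulDr addNr bmul0r. Qed.

Lemma bmulBl x y z : (x - y) ** z = x ** z - y ** z.
Proof. by rewrite bmulDl bmulNl. Qed.

Lemma bmulBr x y z : x ** (y - z) = x ** y - x ** z.
Proof. by rewrite bmulDr bmulNr. Qed.

Lemma bmulrnl x y n : (x *+ n) ** y = (x ** y) *+ n.
Proof. by elim: n => [|n IHn]; rewrite ?bmul0l // !mulrS bmulDl IHn. Qed.

Lemma bmulrnr x y n : x ** (y *+ n) = (x ** y) *+ n.
Proof. by elim: n => [|n IHn]; rewrite ?bmul0r // !mulrS bmulDr IHn. Qed.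

Lemma mul_reassoc x y z : (x ** y) ** z = (| x, y, z |) + x ** (y ** z).
Proof. by rewrite subrK. Qed.

Lemma assocDl x y z w : (| x + y, z, w |) = (| x, z, w |) + (| y, z, w |).
Proof. by rewrite /assoc !bmulDl opprD addrACA. Qed.

Lemma assocDm x y z w : (| x, y + z, w |) = (| x, y, w |) + (| x, z, w |).
Proof. by rewrite /assoc !(bmulDl, bmulDr) opprD addrACA. Qed.

Lemma assocDr x y z w : (| x, y, z + w |) = (| x, y, z |) + (| x, y, w |).
Proof. by rewrite /assoc !bmulDr opprD addrACA. Qed.

Lemma teichmuller x y z w :
  (| x ** y, z, w |) - (| x, y ** z, w |) + (| x, y, z ** w |) =
  x ** (| y, z, w |) + (| x, y, z |) ** w.
Proof.
rewrite /assoc bmulBr bmulBl addrAC subrKA opprB addrACA [RHS]addrACA.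
by rewrite (addrC (x ** (y ** z ** w))).
Qed.

Section Alternative.

Hypothesis mul_alternative : alternative mul.

Lemma assoc_swapl x y z : (| x, y, z |) = - (| y, x, z |).
Proof.
apply/eqP; rewrite -addr_eq0; have := (mul_alternative (x + y) z).1.
rewrite assocDl !assocDm (mul_alternative x z).1 (mul_alternative y z).1.
by rewrite add0r addr0 => /eqP.
Qed.

Lemma assoc_swapr x y z : (| x, y, z |) = - (| x, z, y |).
Proof.
apply/eqP; rewrite -addr_eq0; have := (mul_alternative x (y + z)).2.
rewrite assocDm !assocDr (mul_alternative x y).2 (mul_alternative x z).2.
by rewrite add0r addr0 => /eqP.
Qed.

Lemma assoc_rot x y z : (| x, y, z |) = (| y, z, x |).
Proof. by rewrite assoc_swapl assoc_swapr opprK. Qed.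

Lemma mul_swap_sub x y z :
  (x ** y) ** z - (x ** z) ** y = (| x, y, z |) *+ 2 + x ** (y ** z - z ** y).
Proof.
by rewrite !mul_reassoc (assoc_swapr x z) opprD opprK addrACA bmulBr mulr2n.
Qed.

Section LeftCommutative.

Hypothesis mul_left_comm : forall x y z, x ** (y ** z) = y ** (x ** z).

Lemma commutator_mul x y z : (x ** y - y ** x) ** z = (| x, y, z |) *+ 2.
Proof.
by rewrite bmulBl mulr2n {2}assoc_swapl /assoc (mul_left_comm y) opprB subrKA.
Qed.

Lemma mul_rot_sub x y z :
  (y ** x) ** z - (x ** z) ** y = x ** (y ** z - z ** y).
Proof.
rewrite !mul_reassoc assoc_rot (mul_left_comm y).
by rewrite opprD addrACA subrr add0r bmulBr.
Qed.

Hypothesis K_char0 : char0 K.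

Lemma assoc_mulr x y z w : (| y, z, x ** w |) = x ** (| y, z, w |).
Proof.
apply: (natmul2I K_char0); rewrite /= -bmulrnr -!commutator_mul.
exact: mul_left_comm.
Qed.

Lemma assoc_mull x y z w : (| x ** y, z, w |) = x ** (| y, z, w |).
Proof. by rewrite [LHS]assoc_rot assoc_mulr -assoc_rot. Qed.

Lemma assoc_mulm x y z w : (| y, x ** z, w |) = x ** (| y, z, w |).
Proof. by rewrite 2![LHS]assoc_rot assoc_mulr assoc_rot. Qed.

Lemma assoc_mul_out x y z w :
  (| x, y, z |) ** w = z ** (| x, y, w |) - y ** (| x, z, w |).
Proof.
have := teichmuller x y z w.
by rewrite assoc_mull assoc_mulm assoc_mulr -addrA => /addrI <-; rewrite addrC.
Qed.

Lemma mul_assoc_swap x y z w : x ** (| y, z, w |) = - (y ** (| x, z, w |)).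
Proof.
have := assoc_mul_out y x z w.
rewrite (assoc_swapl y x z) (assoc_swapl y x w) bmulNl bmulNr assoc_mul_out.
by rewrite opprB addrC => /addrI ->; rewrite opprK.
Qed.

Lemma mul_assoc_rot x y z w : z ** (| x, y, w |) = x ** (| y, z, w |).
Proof. by rewrite mul_assoc_swap (assoc_swapl z) bmulNr opprK. Qed.

Lemma assoc_mul_twice x y z w : (| x, y, z |) ** w = (x ** (| y, z, w |)) *+ 2.
Proof.
by rewrite assoc_mul_out mul_assoc_rot (mul_assoc_swap y) opprK mulr2n.
Qed.

Lemma mulA_lmul2 x y z w : (x ** (y ** z)) ** w = x ** (y ** (z ** w)).
Proof.
rewrite mul_reassoc assoc_mulm mul_reassoc bmulDr addrA.
by rewrite (mul_assoc_swap y) addNr add0r.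
Qed.

Lemma mul_commutator_mul0 x y z w : (x ** (y ** z - z ** y)) ** w = 0.
Proof. by rewrite bmulBr bmulBl !mulA_lmul2 (mul_left_comm z) subrr. Qed.

Lemma mul_assoc_mul0 x y z w v : (x ** (| y, z, w |)) ** v = 0.
Proof.
have shift a b : (a ** (| y, z, b |)) ** v = b ** (a ** (| y, z, v |)).
  apply: (natmul2I K_char0); rewrite /= -bmulrnl -bmulrnr -commutator_mul.
  by rewrite mulA_lmul2 commutator_mul bmulrnr assoc_mulr mul_left_comm.
(* The product is alternating in x and w, yet symmetric in them by [shift]. *)
have flip : x ** (| y, z, w |) = - (w ** (| y, z, x |)).
  by rewrite -(assoc_rot w) mul_assoc_swap (assoc_rot x).
apply: (oppr_self_eq0 K_char0).
by rewrite {1}flip bmulNl !shift mul_left_comm.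
Qed.

End LeftCommutative.
End Alternative.
End NonassociativeAlgebra.

Theorem mainTheorem16 (K : fieldType) (V : lmodType K) (mul : V -> V -> V) :
  char0 K ->
  bilinear_mul mul ->
  alternative mul ->
  (forall a b c : V, mul a (mul b c) = mul b (mul a c)) ->
  forall a b c d e : V,
    mul (mul (mul b a) c) d = mul (mul (mul a c) b) d /\
    mul (mul (mul (mul a b) c) d) e = mul (mul (mul (mul a c) b) d) e /\
    mul (mul (mul (mul a b) c) d) e = mul (mul (mul (mul a b) d) c) e.
Proof.
move=> K0 Hb Ha Hlc a b c d e.
have comm_mul0 := mul_commutator_mul0 Hb Ha Hlc K0.
have assoc_mul0 := mul_assoc_mul0 Hb Ha Hlc K0.
split; [|split]; apply/eqP; rewrite -subr_eq0 -!(bmulBl Hb).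
- by rewrite (mul_rot_sub Hb Ha Hlc) comm_mul0.
- (* Only twice: [_ *+ 2] unfolds to a sum, which [bmulDl] would also split. *)
  rewrite (mul_swap_sub Hb Ha) 2!(bmulDl Hb) comm_mul0 (bmul0l Hb) addr0.
  rewrite !(bmulrnl Hb) (assoc_mul_twice Hb Ha Hlc K0) (bmulrnl Hb).
  by rewrite assoc_mul0 !mul0rn.
- rewrite (mul_swap_sub Hb Ha) (bmulDl Hb) comm_mul0 addr0.
  by rewrite (bmulrnl Hb) (assoc_mull Hb Ha Hlc K0) assoc_mul0 mul0rn.
Qed.
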